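(* For every integer $n\geq 5$ and every $p>1$, $$\lambda_{1,p}(T_{n,4})>\lambda_{1,p}(T_{n,3}).$$
   Context: For $n>i\ge 3$, the tadpole graph $T_{n,i}$ is the graph on vertices $t_1,\dots,t_n$ with edges $t_n\sim t_{n-1}\sim\cdots\sim t_i\sim t_{i-1}\sim\cdots\sim t_2\sim t_1\sim t_i$ (a cycle of length $i$ with a path attached at $t_i$). For a finite connected graph $G$, $B(G)=\{x\in V(G):\deg x=1\}$, $C_B(G)=\{f\in\mathbb{R}^{V(G)}: f|_{B(G)}\equiv0\}$, and $$\lambda_{1,p}(G)=\min_{f\in C_B(G)\setminus\{0\}}\frac{\sum_{\{x,y\}\in E(G)}|f(x)-f(y)|^p}{\sum_{x\in V(G)}|f(x)|^p}.$$ *)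

From mathcomp Require Import all_boot all_order all_algebra.
From mathcomp Require Import all_classical all_reals all_analysis.
Set Implicit Arguments. Unset Strict Implicit. Unset Printing Implicit Defensive.
Import Order.TTheory GRing.Theory Num.Theory.
Local Open Scope classical_set_scope.
Local Open Scope ring_scope.

(* Tadpole graph T_{n,i}: vertex t_k (1 <= k <= n) is the ordinal k-1.
   Edges: t_k ~ t_{k+1} (1 <= k < n), and t_1 ~ t_i. *)
Definition tadpole_adj (n i : nat) : rel 'I_n :=
  fun a b =>
    [|| (a.+1 == b :> nat), (b.+1 == a :> nat),
        ((a == 0 :> nat) && (b == i.-1 :> nat))
      | ((b == 0 :> nat) && (a == i.-1 :> nat))].

Arguments tadpole_adj : clear implicits.

Definition deg (n : nat) (G : rel 'I_n) (x : 'I_n) : nat :=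
  #|[set y | G x y]|.

Definition in_CB (R : realType) (n : nat) (G : rel 'I_n) (f : 'I_n -> R) : Prop :=
  forall x, deg G x = 1%N -> f x = 0.

Definition rayleigh (R : realType) (n : nat) (G : rel 'I_n) (p : R)
    (f : 'I_n -> R) : R :=
  (\sum_(x : 'I_n) \sum_(y : 'I_n | (x < y)%N && G x y) `|f x - f y| `^ p)
  / (\sum_(x : 'I_n) `|f x| `^ p).

(* lambda_{1,p}(G): the minimum (here: the infimum, which is attained) of the
   Rayleigh quotient over nonzero f in C_B(G). *)
Definition lambda1p (R : realType) (n : nat) (G : rel 'I_n) (p : R) : R :=
  inf [set r : R | exists f : 'I_n -> R,
        [/\ in_CB G f, (exists x, f x != 0) & r = rayleigh G p f]].

(* Let f be a minimizer of the Rayleigh quotient of T_{n,4} (it exists by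
   compactness of the normalized admissible functions) and lambda its value; we
   may take f >= 0.  The reflection of the 4-cycle t_1 t_2 t_3 t_4 fixing t_2
   and t_4 preserves the Rayleigh quotient and averages f with its mirror image,
   so we may also assume f(t_1) = f(t_3).  Read on T_{n,3}, whose chord t_1 t_3
   replaces t_1 t_4, the energy of f then loses |f(t_1) - f(t_4)|^p, giving
   lambda_{1,p}(T_{n,3}) < lambda unless f is constant, say a, on t_1, t_3, t_4.
   This case contradicts minimality: if f(t_2) < a or f(t_2) > a, levelling the
   cycle lowers the quotient; if f(t_2) = a > 0, raising f(t_2) to a + t adds
   2 t^p = o(t) to the energy but order t to the mass, because p > 1; and if
   a = 0, lifting the zero prefix of the path to its first nonzero value removes
   a jump. *)

From mathcomp Require Import all_boot all_order all_algebra.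
From mathcomp Require Import all_classical all_reals all_analysis.
From mathcomp Require Import lra zify.
Import Order.TTheory GRing.Theory Num.Theory.
Import numFieldNormedType.Exports.

Set Implicit Arguments. Unset Strict Implicit. Unset Printing Implicit Defensive.
Local Open Scope classical_set_scope.
Local Open Scope ring_scope.

Definition pdist (R : realType) (p a b : R) : R := `|a - b| `^ p.

Section PDist.
Variables (R : realType) (p : R).
Implicit Types a b : R.

Lemma pdist_ge0 a b : 0 <= pdist p a b.
Proof. exact: powR_ge0. Qed.

Lemma pdistC a b : pdist p a b = pdist p b a.
Proof. by rewrite /pdist distrC. Qed.

Lemma pdist_gt0 a b : a != b -> 0 < pdist p a b.
Proof. by move=> ab; rewrite powR_gt0 // normr_gt0 subr_eq0. Qed.

Lemma pdist_eq0 a b : pdist p a b = 0 -> a = b.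
Proof. by move/powR_eq0_eq0/normr0_eq0/subr0_eq. Qed.

Lemma pdistxx a : 0 < p -> pdist p a a = 0.
Proof. by move=> p0; rewrite /pdist subrr normr0 powR0 ?gt_eqF. Qed.

Lemma pdist_norm a b : 0 <= p -> pdist p `|a| `|b| <= pdist p a b.
Proof. by move=> p0; apply: ge0_ler_powR; rewrite ?nnegrE // ler_dist_dist. Qed.

Lemma ler_normr_powR a b : 0 <= p -> `|a| <= `|b| -> `|a| `^ p <= `|b| `^ p.
Proof. by move=> p0 ab; apply: ge0_ler_powR; rewrite ?nnegrE. Qed.

Lemma ltr_normr_powR a b : 0 < p -> `|a| < `|b| -> `|a| `^ p < `|b| `^ p.
Proof. by move=> p0 ab; apply: gt0_ltr_powR; rewrite ?nnegrE. Qed.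
End PDist.

Lemma continuous_normr_powR (R : realType) (p : R) :
  0 < p -> continuous (fun x : R => `|x| `^ p).
Proof.
move=> p0 x; have [->|x0] := eqVneq x 0.
  rewrite /continuous_at normr0 powR0 ?gt_eqF//.
  apply/cvgrPdist_lt => e e0; near=> t.
  rewrite sub0r normrN ger0_norm ?powR_ge0//.
  have <- : (e `^ p^-1) `^ p = e by rewrite -powRrM mulVf ?gt_eqF// powRr1// ltW.
  apply: gt0_ltr_powR; rewrite ?nnegrE ?powR_ge0//.
  by near: t; apply: (@nbhs0_lt R R^o); rewrite powR_gt0.
have nx : 0 < `|x| by rewrite normr_gt0.
apply: (@cvg_trans _ ((fun y : R => expR (p * ln `|y|)) @ x)).
  apply: near_eq_cvg; near=> y; rewrite /powR gt_eqF// normr_gt0.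
  by near: y; apply: (@cvgr_neq0 _ R^o _ _ _ id x) => //; exact: cvg_id.
rewrite /powR gt_eqF//.
apply: (@continuous_comp _ _ _ (fun y : R => p * ln `|y|) expR); last exact: continuous_expR.
apply: continuousM; first exact: cvg_cst.
apply: continuous_comp; [exact: norm_continuous | exact: continuous_ln].
Unshelve. all: end_near. Qed.

Lemma exists_bulge (R : realType) (p lam a : R) : 1 < p -> 0 < lam -> 0 < a ->
  exists2 t, 0 < t & 2 * t `^ p < lam * ((a + t) `^ p - a `^ p).
Proof.
move=> p1 lam0 a0; pose s := (lam / 4) `^ (p - 1)^-1.
have s0 : 0 < s by rewrite powR_gt0 ?divr_gt0.
(* [s] solves [s ^ (p - 1) = lam / 4], so that [t ^ p] is of order [t * lam / 4]. *)
have sp : s `^ p = s * (lam / 4).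
  rewrite -[X in s `^ X](subrK 1 p) addrC powRD; last by apply/implyP => _; rewrite gt_eqF.
  rewrite powRr1 ?(ltW s0) // -powRrM mulVf ?powRr1 //; last by rewrite subr_eq0 gt_eqF.
  by rewrite divr_ge0 ?(ltW lam0).
have gain : a `^ p * s <= (a + a * s) `^ p - a `^ p.
  have -> : a + a * s = a * (1 + s) by rewrite mulrDr mulr1.
  rewrite powRM ?(ltW a0) ?addr_ge0 ?(ltW s0) //.
  have : 1 + s <= (1 + s) `^ p by apply: le1r_powR; rewrite ?lerDl ltW.
  move/(ler_wpM2l (powR_ge0 a p)); lra.
exists (a * s); first exact: mulr_gt0.
rewrite powRM ?(ltW a0) ?(ltW s0) // sp.
have := ler_wpM2l (ltW lam0) gain.
have : 0 < lam * (a `^ p * s) by rewrite mulr_gt0 // mulr_gt0 // powR_gt0.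
lra.
Qed.

Section Rayleigh.
Variables (R : realType) (n : nat) (G : rel 'I_n) (p : R).
Hypothesis p_gt0 : 0 < p.

Definition energy (f : 'I_n -> R) : R :=
  \sum_(x : 'I_n) \sum_(y : 'I_n | (x < y)%N && G x y) pdist p (f x) (f y).

Definition mass (f : 'I_n -> R) : R := \sum_(x : 'I_n) `|f x| `^ p.

Lemma rayleighE f : rayleigh G p f = energy f / mass f.
Proof. by []. Qed.

Lemma energy_ge0 f : 0 <= energy f.
Proof. by do 2!(apply: sumr_ge0 => ? _); exact: powR_ge0. Qed.

Lemma mass_ge0 f : 0 <= mass f.
Proof. by apply: sumr_ge0 => x _; exact: powR_ge0. Qed.

Lemma normr_powR_le_mass f x : `|f x| `^ p <= mass f.
Proof. by rewrite /mass (bigD1 x) //= lerDl sumr_ge0 // => y _; exact: powR_ge0. Qed.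

Lemma mass_gt0 f : (exists x, f x != 0) -> 0 < mass f.
Proof.
by case=> x fx; apply: lt_le_trans (normr_powR_le_mass f x); rewrite powR_gt0 ?normr_gt0.
Qed.

Lemma mass_eq0 f : (forall x, f x = 0) -> mass f = 0.
Proof. by move=> f0; rewrite /mass big1 // => x _; rewrite f0 normr0 powR0 ?gt_eqF. Qed.

Lemma mass_scale s f : 0 <= s -> mass (fun x => s * f x) = s `^ p * mass f.
Proof.
by move=> s0; rewrite /mass mulr_sumr; apply: eq_bigr => x _; rewrite normrM ger0_norm ?powRM.
Qed.

Lemma energy_scale s f : 0 <= s -> energy (fun x => s * f x) = s `^ p * energy f.
Proof.
move=> s0; rewrite /energy mulr_sumr; apply: eq_bigr => x _; rewrite mulr_sumr.
by apply: eq_bigr => y _; rewrite /pdist -mulrBr normrM ger0_norm ?powRM.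
Qed.

Lemma rayleigh_scale s f : 0 < s -> rayleigh G p (fun x => s * f x) = rayleigh G p f.
Proof.
move=> s0; rewrite !rayleighE mass_scale ?energy_scale ?ltW // invfM mulrACA.
by rewrite mulfV ?mul1r // gt_eqF ?powR_gt0.
Qed.
End Rayleigh.

Section Minimizer.
Variables (R : realType) (n : nat) (G : rel 'I_n) (p : R).
Hypothesis p_gt0 : 0 < p.

Local Notation vec := (prod_topology (fun _ : 'I_n => R)).

Lemma continuous_energy : continuous (fun f : vec => energy G p f).
Proof.
apply: continuous_big => [|x _]; first exact: add_continuous.
apply: continuous_big => [|y _ f]; first exact: add_continuous.
apply: (@continuous_comp _ _ _ (fun f : vec => f x - f y) (fun t => `|t| `^ p)).
  by apply: continuousB; exact: (@proj_continuous _ (fun=> R)).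
exact: continuous_normr_powR.
Qed.

Lemma continuous_mass : continuous (fun f : vec => mass p f).
Proof.
apply: continuous_big => [|x _ f]; first exact: add_continuous.
apply: (@continuous_comp _ _ _ (fun f : vec => f x) (fun t => `|t| `^ p)).
  exact: (@proj_continuous _ (fun=> R)).
exact: continuous_normr_powR.
Qed.

Definition rayleigh_minimizer (f : 'I_n -> R) :=
  [/\ in_CB G f, exists x, f x != 0 &
      forall g, in_CB G g -> (exists x, g x != 0) -> rayleigh G p f <= rayleigh G p g].

Lemma exists_rayleigh_minimizer :
  (exists2 f0 : 'I_n -> R, in_CB G f0 & exists x, f0 x != 0) ->
  exists f, rayleigh_minimizer f.
Proof.
move=> [f0 f0B f0nz].
pose box i : set R := if deg G i == 1%N then [set 0] else `[-1, 1]%classic.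
pose K : set vec := [set f | forall i, box i (f i)] `&` [set f | mass p f = 1].
have K_compact : compact K.
  apply: compact_closedI.
    apply: tychonoff => i; rewrite /box.
    by case: ifP => _; [exact: compact_set1 | exact: segment_compact].
  apply: (@preimage_closed _ _ (fun f : vec => mass p f) [set 1]); last exact: closed_eq.
  by move=> f _; exact: continuous_mass.
pose normalize (g : 'I_n -> R) x := mass p g `^ (- p^-1) * g x.
have normalizeK g : in_CB G g -> (exists x, g x != 0) -> K (normalize g).
  move=> gB gnz; have m_gt0 := mass_gt0 p gnz.
  have s_ge0 : 0 <= mass p g `^ (- p^-1) by exact: powR_ge0.
  have mass1 : mass p (normalize g) = 1.
    rewrite mass_scale // -powRrM mulNr mulVf ?gt_eqF // powRN powRr1 ?(ltW m_gt0) //.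
    by rewrite mulVf ?gt_eqF.
  split => // i; rewrite /box; case: ifP => [/eqP/gB gi|_]; first by rewrite /normalize gi mulr0.
  rewrite /= in_itv /= -ler_norml leNgt; apply/negP => gt1.
  have := normr_powR_le_mass p (normalize g) i; rewrite mass1; apply/negP; rewrite -ltNge.
  have one_pow : 1 `^ p = 1 :> R by rewrite powR1.
  by rewrite -[X in X < _]one_pow; apply: gt0_ltr_powR; rewrite ?nnegrE.
have K_nonempty : K !=set0 by exists (normalize f0); exact: normalizeK.
have [c cK c_min] := compact_EVT_min K_nonempty K_compact
  (continuous_subspaceT continuous_energy).
have [c_box c_mass] : (forall i, box i (c i)) /\ mass p c = 1 by move: cK; rewrite inE.
have c_nz : exists x, c x != 0.
  apply: contrapT => c0; move: c_mass; rewrite (mass_eq0 p_gt0) => [/esym/eqP|x].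
    by rewrite oner_eq0.
  by apply: contrapT => cx; apply: c0; exists x; apply/eqP.
exists c; split=> [x /eqP dx|//|g gB gnz]; first by have := c_box x; rewrite /box dx.
rewrite -(@rayleigh_scale _ _ G p (mass p g `^ (- p^-1)) g) ?powR_gt0 ?mass_gt0 //.
rewrite !rayleighE c_mass (normalizeK g gB gnz).2 !divr1.
by apply: c_min; rewrite inE; exact: normalizeK.
Qed.

Lemma lambda1p_le g : in_CB G g -> (exists x, g x != 0) -> lambda1p G p <= rayleigh G p g.
Proof.
move=> gB gnz; apply: ge_inf; last by exists g.
by exists 0 => _ [h [_ _ ->]]; rewrite rayleighE divr_ge0 ?energy_ge0 ?mass_ge0.
Qed.

Lemma lambda1p_minimizer f : rayleigh_minimizer f -> lambda1p G p = rayleigh G p f.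
Proof.
case=> fB fnz fmin; apply/eqP; rewrite eq_le lambda1p_le //=.
by apply: lb_le_inf => [|_ [g [gB gnz ->]]]; [exists (rayleigh G p f), f | exact: fmin].
Qed.

Lemma minimizer_mass_le f g :
  rayleigh_minimizer f -> in_CB G g -> rayleigh G p f * mass p g <= energy G p g.
Proof.
case=> _ _ fmin gB; have [[x gx]|g0] := pselect (exists x, g x != 0).
  have := fmin g gB (ex_intro _ x gx).
  by rewrite rayleighE ler_pdivlMr // (mass_gt0 p (ex_intro _ x gx)).
rewrite (mass_eq0 p_gt0) ?mulr0 ?energy_ge0 // => x.
by apply: contrapT => gx; apply: g0; exists x; exact/eqP.
Qed.
End Minimizer.

Lemma sum_ord_eq_nat (V : nmodType) m c (F : nat -> V) :
  \sum_(y < m | y == c :> nat) F y = if (c < m)%N then F c else 0.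
Proof.
case: ifP => cm; first by rewrite (big_pred1 (Ordinal cm)) // => y; rewrite -val_eqE.
by rewrite big_pred0 // => y; apply: contraFF cm => /eqP <-.
Qed.

Lemma deg_gt1 n (G : rel 'I_n) x a b : a != b -> G x a -> G x b -> (1 < deg G x)%N.
Proof.
move=> ab xa xb; have <- : #|[set a; b]%SET| = 2%N by rewrite cards2 ab.
by apply: subset_leq_card; apply/fintype.subsetP => y; rewrite !inE => /orP[]/eqP->.
Qed.

Section TadpoleSequences.
Variables (R : realType) (p : R) (L : nat).

(* A function on T_{L+1,i} is a sequence F read on 0..L, F k being its value at
   t_{k+1}; the pendant vertex is L. *)
Definition path_energy (F : nat -> R) := \sum_(0 <= k < L) pdist p (F k) (F k.+1).
Definition tadpole_energy (i : nat) (F : nat -> R) := path_energy F + pdist p (F 0%N) (F i.-1).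
Definition seq_mass (F : nat -> R) := \sum_(0 <= k < L.+1) `|F k| `^ p.

Lemma mass_tadpole (F : nat -> R) : mass p (fun x : 'I_L.+1 => F x) = seq_mass F.
Proof. by rewrite /seq_mass big_mkord. Qed.

Lemma energy_tadpole i (F : nat -> R) : (3 <= i <= L)%N ->
  energy (tadpole_adj L.+1 i) p (fun x : 'I_L.+1 => F x) = tadpole_energy i F.
Proof.
move=> /andP[i3 iL].
have edges (x : 'I_L.+1) :
    \sum_(y < L.+1 | (x < y)%N && tadpole_adj L.+1 i x y) pdist p (F x) (F y) =
    (if (x.+1 < L.+1)%N then pdist p (F x) (F x.+1) else 0) +
    (if x == 0 :> nat then pdist p (F 0%N) (F i.-1) else 0).
  rewrite (bigID (fun y : 'I_L.+1 => y == x.+1 :> nat)) /=; congr (_ + _).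
    rewrite -(sum_ord_eq_nat _ _ (fun y => pdist p (F x) (F y))).
    by apply: eq_bigl => y; rewrite /tadpole_adj; apply/idP/idP; lia.
  case: eqP => [x0|x0]; last by rewrite big_pred0 // => y; rewrite /tadpole_adj; lia.
  rewrite x0 -[RHS](@ifT _ (i.-1 < L.+1)%N _ 0); last by lia.
  rewrite -(sum_ord_eq_nat _ _ (fun y => pdist p (F 0%N) (F y))).
  by apply: eq_bigl => y; rewrite /tadpole_adj x0; apply/idP/idP; lia.
rewrite /energy (eq_bigr _ (fun x _ => edges x)) big_split /= -[X in _ + X]big_mkcond.
rewrite (sum_ord_eq_nat _ _ (fun=> pdist p (F 0%N) (F i.-1))) /=; congr (_ + _).
rewrite big_ord_recr /= ltnn addr0 /path_energy big_mkord.
by apply: eq_bigr => x _; rewrite ltnS ltn_ord.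
Qed.

Lemma tadpole_deg_eq1 i (x : 'I_L.+1) : (3 <= i <= L)%N ->
  (deg (tadpole_adj L.+1 i) x == 1%N) = (x == ord_max).
Proof.
move=> /andP[i3 iL]; have xL := ltn_ord x.
apply/eqP/eqP => [dx|->].
  apply: val_inj => /=; apply/eqP; apply: contraLR (introT eqP dx) => xnL.
  rewrite neq_ltn; apply/orP; right.
  have [x0|x0] := eqVneq (x : nat) 0%N.
    by apply: (@deg_gt1 _ _ _ (inord 1) (inord i.-1));
      rewrite -?val_eqE /tadpole_adj /= !inordK; lia.
  by apply: (@deg_gt1 _ _ _ (inord x.-1) (inord x.+1));
    rewrite -?val_eqE /tadpole_adj /= !inordK; lia.
rewrite /deg (@eq_card _ _ (pred1 (inord L.-1))) ?card1 // => y.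
rewrite inE /tadpole_adj -val_eqE /= inordK; last by lia.
have yL := ltn_ord y.
by apply/idP/idP; rewrite in_setE /= => ?; lia.
Qed.

Lemma in_CB_tadpole i (f : 'I_L.+1 -> R) : (3 <= i <= L)%N ->
  in_CB (tadpole_adj L.+1 i) f <-> f ord_max = 0.
Proof.
move=> iL; split => [fB|fL x /eqP]; first by apply: fB; apply/eqP; rewrite tadpole_deg_eq1.
by rewrite tadpole_deg_eq1 // => /eqP->.
Qed.

Definition tail_energy (F : nat -> R) := \sum_(3 <= k < L) pdist p (F k) (F k.+1).
Definition tail_mass (F : nat -> R) := \sum_(3 <= k < L.+1) `|F k| `^ p.

Definition override3 (x0 x1 x2 : R) (F : nat -> R) (k : nat) : R :=
  match k with 0 => x0 | 1 => x1 | 2 => x2 | _ => F k end.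

Hypothesis L_ge4 : (4 <= L)%N.

Lemma tadpole_energy4E F : tadpole_energy 4 F =
  pdist p (F 0%N) (F 1%N) + pdist p (F 1%N) (F 2%N) + pdist p (F 2%N) (F 3%N)
  + pdist p (F 0%N) (F 3%N) + tail_energy F.
Proof.
rewrite /tadpole_energy /path_energy (big_cat_nat _ (n := 3)) //=; last by lia.
by rewrite big_mkord !big_ord_recr big_ord0 /= add0r -/(tail_energy F); lra.
Qed.

Lemma seq_massE F : seq_mass F = `|F 0%N| `^ p + `|F 1%N| `^ p + `|F 2%N| `^ p + tail_mass F.
Proof.
rewrite /seq_mass (big_cat_nat _ (n := 3)) //=; last by lia.
by rewrite big_mkord !big_ord_recr big_ord0 /= add0r.
Qed.

Lemma tail_energy_override3 x0 x1 x2 F : tail_energy (override3 x0 x1 x2 F) = tail_energy F.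
Proof. by apply: eq_big_nat => -[|[|[|k]]]. Qed.

Lemma tail_mass_override3 x0 x1 x2 F : tail_mass (override3 x0 x1 x2 F) = tail_mass F.
Proof. by apply: eq_big_nat => -[|[|[|k]]]. Qed.

Lemma override3_L x0 x1 x2 F : override3 x0 x1 x2 F L = F L.
Proof. by case: L L_ge4 => [|[|[|k]]]. Qed.

Lemma path_energy_split m F : (0 < m <= L)%N ->
  path_energy F = \sum_(0 <= k < m.-1) pdist p (F k) (F k.+1) + pdist p (F m.-1) (F m)
                  + \sum_(m <= k < L) pdist p (F k) (F k.+1).
Proof.
move=> /andP[m_gt0 mL]; rewrite /path_energy (big_cat_nat _ (n := m)) //=.
by rewrite -[in X in X + _](prednK m_gt0) big_nat_recr //= prednK.
Qed.

Hypothesis p_gt1 : 1 < p.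
Let p_gt0 : 0 < p := lt_trans ltr01 p_gt1.

Definition admissible (F : nat -> R) := F L = 0 /\ exists x : 'I_L.+1, F x != 0.

Lemma seq_mass_gt0 F : admissible F -> 0 < seq_mass F.
Proof. by case=> _ Fnz; rewrite -mass_tadpole mass_gt0. Qed.

Lemma path_energy_gt0 F : admissible F -> 0 < path_energy F.
Proof.
case=> FL [x Fx]; rewrite lt_neqAle sumr_ge0 ?andbT => [|k _]; last exact: pdist_ge0.
apply: contra Fx; rewrite eq_sym /path_energy big_mkord.
move=> /eqP/(psumr_eq0P (fun k _ => pdist_ge0 _ _ _)) flat.
have backward j : (j <= L)%N -> F (L - j)%N = 0.
  elim: j => [|j IHj] jL; first by rewrite subn0.
  have jL' : (L - j.+1 < L)%N by lia.
  rewrite (pdist_eq0 (flat (Ordinal jL') isT)) /=.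
  have -> : (L - j.+1).+1 = (L - j)%N by lia.
  exact/IHj/ltnW.
have := backward (L - x)%N (leq_subr _ _).
by rewrite subKn => [->|]; last by rewrite -ltnS.
Qed.

Section Extremal.
Variable lam : R.
Hypothesis lam_le : forall G, G L = 0 -> lam * seq_mass G <= tadpole_energy 4 G.

Definition extremal F := admissible F /\ tadpole_energy 4 F <= lam * seq_mass F.

Lemma extremal_defect_le H G : extremal H -> G L = 0 ->
  tadpole_energy 4 H - lam * seq_mass H <= tadpole_energy 4 G - lam * seq_mass G.
Proof. by case=> _ hH /lam_le; lra. Qed.

Lemma extremal_lam_gt0 H : extremal H -> 0 < lam.
Proof.
case=> H_adm hH; rewrite -(pmulr_lgt0 _ (seq_mass_gt0 H_adm)).
apply: lt_le_trans hH; apply: ltr_wpDr; [exact: pdist_ge0 | exact: path_energy_gt0].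
Qed.

Lemma extremal_norm H : extremal H -> extremal (fun k => `|H k|).
Proof.
case=> -[HL [x Hx]] hH; split; first by split; [rewrite HL normr0 | exists x; rewrite normr_eq0].
have -> : seq_mass (fun k => `|H k|) = seq_mass H.
  by apply: eq_bigr => k _; rewrite normr_id.
apply: le_trans hH; apply: lerD; last exact/pdist_norm/ltW.
by apply: ler_sum_nat => k _; exact/pdist_norm/ltW.
Qed.

Lemma extremal_sym A : extremal A -> (forall k, 0 <= A k) ->
  exists H, [/\ extremal H, forall k, 0 <= H k & H 2%N = H 0%N].
Proof.
move=> [[AL [x Ax]] hA] A_ge0.
have [A20|A20] := eqVneq (A 2%N) (A 0%N).
  by exists A; split=> //; split=> //; split=> //; exists x.
(* [H1] and [H3] copy the values of [A] on one side of the diagonal [t_2 t_4] of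
   the square to the other side; their energies and masses add up to twice those
   of [A], so both attain [lam]. *)
pose H1 := override3 (A 0%N) (A 1%N) (A 0%N) A.
pose H3 := override3 (A 2%N) (A 1%N) (A 2%N) A.
have energyE : tadpole_energy 4 H1 + tadpole_energy 4 H3 = 2 * tadpole_energy 4 A.
  rewrite !tadpole_energy4E /= !tail_energy_override3.
  rewrite (pdistC _ (A 1%N) (A 0%N)) (pdistC _ (A 2%N) (A 1%N)); lra.
have massE : lam * seq_mass H1 + lam * seq_mass H3 = 2 * (lam * seq_mass A).
  rewrite -mulrDr !seq_massE /= !tail_mass_override3 mulrCA; congr (lam * _); lra.
have h1 := lam_le (etrans (override3_L _ _ _ _) AL : H1 L = 0).
have h3 := lam_le (etrans (override3_L _ _ _ _) AL : H3 L = 0).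
have override_ge0 x0 x1 x2 : 0 <= x0 -> 0 <= x1 -> 0 <= x2 ->
    forall k, 0 <= override3 x0 x1 x2 A k.
  by move=> x0_ge0 x1_ge0 x2_ge0 [|[|[|k]]] //; exact: A_ge0.
have [A0|A0] := eqVneq (A 0%N) 0.
- exists H3; split=> //; last exact: override_ge0.
  by split; [split; [exact: etrans (override3_L _ _ _ _) AL | exists ord0; rewrite /= -A0] | lra].
- exists H1; split=> //; last exact: override_ge0.
  by split; [split; [exact: etrans (override3_L _ _ _ _) AL | exists ord0] | lra].
Qed.

Lemma extremal_zero_prefix H m : extremal H -> (3 < m <= L)%N ->
  (forall k, (k < m)%N -> H k = 0) -> H m = 0.
Proof.
move=> H_ext /andP[m_gt3 mL] H_lt; have lam_gt0 := extremal_lam_gt0 H_ext.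
have [->|mL'] := eqVneq m L; first exact: H_ext.1.1.
apply: contrapT => /eqP Hm; have {mL mL'} mL : (m < L)%N by rewrite ltn_neqAle mL' mL.
(* Lifting the zero prefix to the level [H m] removes the jump between [m.-1]
   and [m] without lowering the mass. *)
pose G k := H (maxn k m).
have GL : G L = 0 by rewrite /G (maxn_idPl (ltnW mL)); exact: H_ext.1.1.
have G_low k : (k <= m)%N -> G k = H m by move=> km; rewrite /G (maxn_idPr km).
have G_high k : (m <= k)%N -> G k = H k by move=> mk; rewrite /G (maxn_idPl mk).
have m_gt0 : (0 < m)%N by apply: leq_trans m_gt3.
have m_range : (0 < m <= L)%N by rewrite m_gt0 ltnW.
have head_G : \sum_(0 <= k < m.-1) pdist p (G k) (G k.+1) = 0.
  rewrite big1_seq // => k /andP[_]; rewrite mem_index_iota => /andP[_ k_lt].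
  by rewrite !G_low ?pdistxx //; lia.
have tail_G : \sum_(m <= k < L) pdist p (G k) (G k.+1) = \sum_(m <= k < L) pdist p (H k) (H k.+1).
  by apply: eq_big_nat => k /andP[mk _]; rewrite !G_high // ltnW.
have head_H : 0 <= \sum_(0 <= k < m.-1) pdist p (H k) (H k.+1).
  by apply: sumr_ge0 => k _; exact: pdist_ge0.
have edge_H : 0 < pdist p (H m.-1) (H m).
  by rewrite H_lt ?prednK ?ltn_predL // pdist_gt0 // eq_sym.
have energy_lt : tadpole_energy 4 G < tadpole_energy 4 H.
  rewrite /tadpole_energy /= !(path_energy_split _ m_range) head_G tail_G.
  rewrite !G_low ?leq_pred ?(ltnW m_gt3) // (H_lt 0%N) ?(H_lt 3%N) //.
  by rewrite !pdistxx //; lra.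
have mass_le : seq_mass H <= seq_mass G.
  apply: ler_sum_nat => k _; have [k_lt|mk] := ltnP k m; last by rewrite G_high.
  by rewrite H_lt // normr0 powR0 ?gt_eqF // powR_ge0.
have := extremal_defect_le H_ext GL.
have := ler_wpM2l (ltW lam_gt0) mass_le.
lra.
Qed.

Lemma extremal_cycle_nonzero H : extremal H -> ~ (forall k, (k <= 3)%N -> H k = 0).
Proof.
move=> H_ext H_cycle; have [[_ [x Hx]] _] := H_ext.
have zero_below m : (m <= L.+1)%N -> forall k, (k < m)%N -> H k = 0.
  elim: m => [//|m IHm] mL k; rewrite ltnS leq_eqVlt => /orP[/eqP->|]; last exact/IHm/ltnW.
  have [m3|m_gt3] := leqP m 3; first exact: H_cycle.
  by apply: extremal_zero_prefix; rewrite ?m_gt3 //; exact/IHm/ltnW.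
by move/eqP: Hx; apply; apply: zero_below (ltn_ord x).
Qed.

Section ConstantOnCycle.
Variable H : nat -> R.
Hypotheses (H_ext : extremal H) (H_ge0 : forall k, 0 <= H k).
Hypotheses (H2 : H 2%N = H 0%N) (H3 : H 3%N = H 0%N).

Let lam_gt0 : 0 < lam := extremal_lam_gt0 H_ext.
Let HL : H L = 0 := H_ext.1.1.

Lemma constant_cycle_energy :
  tadpole_energy 4 H = 2 * pdist p (H 0%N) (H 1%N) + tail_energy H.
Proof. by rewrite tadpole_energy4E H2 H3 pdistxx // (pdistC _ (H 1%N)); lra. Qed.

Lemma constant_cycle_mass :
  seq_mass H = 2 * `|H 0%N| `^ p + `|H 1%N| `^ p + tail_mass H.
Proof. by rewrite seq_massE H2; lra. Qed.

Lemma constant_cycle_no_dip : ~ H 1%N < H 0%N.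
Proof.
move=> lt10; set a := H 0%N in lt10 *.
have := extremal_defect_le H_ext (etrans (override3_L a a a H) HL).
rewrite constant_cycle_energy constant_cycle_mass tadpole_energy4E seq_massE /=.
rewrite tail_energy_override3 tail_mass_override3 H3 pdistxx //.
have := pdist_gt0 p (negbT (gt_eqF lt10)).
have : `|H 1%N| `^ p <= `|a| `^ p.
  by apply: ler_normr_powR; rewrite ?(ltW p_gt0) // !ger0_norm ?H_ge0 // ltW.
move/(ler_wpM2l (ltW lam_gt0)); lra.
Qed.

Lemma constant_cycle_no_peak : ~ H 0%N < H 1%N.
Proof.
move=> lt01; set b := H 1%N in lt01 *.
have := extremal_defect_le H_ext (etrans (override3_L b b b H) HL).
rewrite constant_cycle_energy constant_cycle_mass tadpole_energy4E seq_massE /=.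
rewrite tail_energy_override3 tail_mass_override3 H3 pdistxx // (pdistC _ b).
have : `|H 0%N| `^ p < `|b| `^ p.
  by apply: ltr_normr_powR; rewrite // !ger0_norm ?H_ge0.
rewrite -(ltr_pM2l lam_gt0); lra.
Qed.

Lemma constant_cycle_no_flat : H 1%N = H 0%N -> ~ 0 < H 0%N.
Proof.
move=> H10 a_gt0; set a := H 0%N in H10 a_gt0 *.
have [t t_gt0 bulge] := exists_bulge p_gt1 lam_gt0 a_gt0.
have := extremal_defect_le H_ext (etrans (override3_L a (a + t) a H) HL).
rewrite constant_cycle_energy constant_cycle_mass tadpole_energy4E seq_massE /=.
rewrite tail_energy_override3 tail_mass_override3 H3 H10 !pdistxx // (pdistC _ (a + t)).
have -> : pdist p a (a + t) = t `^ p by rewrite /pdist opprD addNKr normrN gtr0_norm.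
rewrite !ger0_norm ?addr_ge0 ?(ltW a_gt0) ?(ltW t_gt0) //.
move: bulge; rewrite mulrBr; lra.
Qed.
End ConstantOnCycle.

Lemma extremal_beats_tadpole3 F : extremal F ->
  exists2 G, admissible G & tadpole_energy 3 G < lam * seq_mass G.
Proof.
move=> /extremal_norm/extremal_sym/(_ (fun k => normr_ge0 _)) [H [H_ext H_ge0 H2]].
exists H; first exact: H_ext.1.
have [H3|H3] := eqVneq (H 3%N) (H 0%N); last first.
  apply: lt_le_trans H_ext.2; rewrite /tadpole_energy /= H2 pdistxx // addr0.
  by rewrite ltrDl pdist_gt0 // eq_sym.
exfalso; have [lt10|lt01|H10] := ltgtP (H 1%N) (H 0%N).
- exact: constant_cycle_no_dip H_ext H_ge0 H2 H3 lt10.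
- exact: constant_cycle_no_peak H_ext H_ge0 H2 H3 lt01.
have [H0|] := eqVneq (H 0%N) 0.
  by apply: (extremal_cycle_nonzero H_ext) => -[|[|[|[|k]]]] //= _; rewrite ?H10 ?H2 ?H3.
by rewrite neq_lt ltNge H_ge0 => /(constant_cycle_no_flat H_ext H2 H3 H10).
Qed.
End Extremal.
End TadpoleSequences.

Theorem lemma2p3 (R : realType) (n : nat) (p : R) :
  (5 <= n)%N -> 1 < p ->
  lambda1p (tadpole_adj n 3) p < lambda1p (tadpole_adj n 4) p.
Proof.
move=> n_ge5 p_gt1; have p_gt0 : 0 < p := lt_trans ltr01 p_gt1.
case: n n_ge5 => [//|L]; rewrite ltnS => L_ge4.
have cycle4 : (3 <= 4 <= L)%N := L_ge4.
have cycle3 : (3 <= 3 <= L)%N := ltnW L_ge4.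
have [f f_min] : exists f, rayleigh_minimizer (tadpole_adj L.+1 4) p f.
  apply: exists_rayleigh_minimizer => //; exists (fun x : 'I_L.+1 => (x == ord0)%:R).
    by apply/(in_CB_tadpole _ cycle4); rewrite -val_eqE /=; case: (L) L_ge4.
  by exists ord0; rewrite eqxx oner_neq0.
pose F k := f (inord k); have fF : f = fun x => F x by apply/funext => x; rewrite /F inord_val.
rewrite (lambda1p_minimizer f_min); set lam := rayleigh _ p f.
have lam_le G : G L = 0 -> lam * seq_mass p L G <= tadpole_energy p L 4 G.
  move=> GL; rewrite -mass_tadpole -energy_tadpole //.
  by apply: minimizer_mass_le => //; apply/(in_CB_tadpole _ cycle4).
have F_ext : extremal p L lam F.
  have [/(in_CB_tadpole _ cycle4) fL [x fx] _] := f_min.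
  have FL : F L = 0 by rewrite /F -fL; congr f; apply: val_inj; exact: inordK.
  have F_adm : admissible L F by split=> //; exists x; rewrite /F inord_val.
  split=> //; rewrite /lam fF rayleighE energy_tadpole // mass_tadpole divfK //.
  by rewrite lt0r_neq0 // seq_mass_gt0.
have [G [GL Gnz] G_lt] := extremal_beats_tadpole3 L_ge4 p_gt1 lam_le F_ext.
have GB : in_CB (tadpole_adj L.+1 3) (fun x : 'I_L.+1 => G x) by apply/(in_CB_tadpole _ cycle3).
apply: le_lt_trans (lambda1p_le p GB Gnz) _.
by rewrite rayleighE energy_tadpole // mass_tadpole ltr_pdivrMr // seq_mass_gt0.
Qed.
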